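(* Let $0<m<1$, $\mu>0$, $f$ smooth, $u_->u_+=0$, $s=\frac{f(u_+)-f(u_-)}{u_+-u_-}$ with $f'(u_+)=s<f'(u_-)$, and $f''(u_+)=\cdots=f^{(k_+)}(u_+)=0$, $f^{(k_++1)}(u_+)\ne0$ for some integer $k_+\ge1$. Let $U$ be a monotonically decreasing viscous shock profile, i.e. $-sU'+f(U)'=\mu(U^m)''$ with $U(-\infty)=u_-$, $U(+\infty)=u_+$. Then there is a constant $C>0$ such that for all $\xi\in\mathbb{R}$, $$|U_\xi(\xi)|\le CU(\xi)^{k_++2-m},\qquad |U_{\xi\xi}(\xi)|\le CU(\xi)^{2k_++3-2m}.$$ *)

From Stdlib Require Import Reals.
From Coquelicot Require Import Coquelicot.
Open Scope R_scope.

Definition smooth (f : R -> R) : Prop :=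
  forall (n : nat) (x : R), ex_derive_n f n x.

Definition twice_differentiable (U : R -> R) : Prop :=
  forall x, ex_derive U x /\ ex_derive (Derive U) x.

Definition strictly_decreasing (U : R -> R) : Prop :=
  forall x y, x < y -> U y < U x.

From Stdlib Require Import Reals Lra Lia.
From Coquelicot Require Import Coquelicot.
Open Scope R_scope.

(* Integrating the profile equation once gives mu (U^m)' = f(U) - sU - K.  Since U^m is
   bounded while U -> 0 at +oo, (U^m)' cannot tend to the nonzero limit (f(0) - K)/mu, so
   K = f(0) and U' = G(U) with G(u) = (f(u) - f(0) - su) u^(1-m) / (mu m); moreover
   U'' = G'(U) U'.  As f'' = ... = f^(k+) = 0 at 0, Taylor's theorem gives
   |f'(u) - s| <= B u^k+ and the mean value theorem |f(u) - f(0) - su| <= B u^(k+ + 1)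
   on (0, u-], whence |G(u)| = O(u^(k+ + 2 - m)) and |G'(u)| = O(u^(k+ + 1 - m)). *)

Lemma Derive_n_Derive (g : R -> R) (n : nat) (x : R) :
  Derive_n (Derive g) n x = Derive_n g (S n) x.
Proof.
  revert x; induction n as [|n IH]; intros x; [reflexivity|].
  apply Derive_ext. intros t. apply IH.
Qed.

Lemma smooth_Derive (g : R -> R) : smooth g -> smooth (Derive g).
Proof.
  intros Hg [|k] x; [exact I |].
  apply (ex_derive_ext (Derive_n g (S k))); [intros t; symmetry; apply Derive_n_Derive |].
  exact (Hg (S (S k)) x).
Qed.

Lemma Taylor_poly_flat_at_0 (g : R -> R) (n : nat) (u : R) :
  (forall j, (1 <= j <= n)%nat -> Derive_n g j 0 = 0) ->
  sum_f_R0 (fun j => (u - 0) ^ j / INR (Factorial.fact j) * Derive_n g j 0) n = g 0.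
Proof.
  intros Hflat. induction n as [|n IH].
  - simpl. field.
  - rewrite tech5, IH, Hflat by (intros; try apply Hflat; lia). ring.
Qed.

Lemma flat_at_0_bound (g : R -> R) (n : nat) (y0 : R) :
  smooth g -> (forall j, (1 <= j <= n)%nat -> Derive_n g j 0 = 0) -> 0 < y0 ->
  exists M, 0 <= M /\ forall u, 0 < u <= y0 -> Rabs (g u - g 0) <= M * u ^ S n.
Proof.
  intros Hg Hflat Hy0.
  destruct (continuity_ab_maj (fun t => Rabs (Derive_n g (S n) t)) 0 y0)
    as [z0 [Hmax _]]; [lra| |].
  { intros c _. apply continuity_pt_comp with (f2 := Rabs); [|apply Rcontinuity_abs].
    apply continuity_pt_filterlim, (ex_derive_continuous (Derive_n g (S n))), (Hg (S (S n))). }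
  assert (Hfact : 0 < INR (Factorial.fact (S n))) by apply INR_fact_lt_0.
  exists (Rabs (Derive_n g (S n) z0) / INR (Factorial.fact (S n))).
  split; [apply Rdiv_le_0_compat; [apply Rabs_pos | exact Hfact]|].
  intros u Hu.
  destruct (Taylor_Lagrange g n 0 u) as [z [Hz ->]]; [lra | intros; apply Hg |].
  rewrite Taylor_poly_flat_at_0, Rminus_0_r by exact Hflat.
  replace (_ + _ - g 0) with (u ^ S n / INR (Factorial.fact (S n)) * Derive_n g (S n) z) by ring.
  assert (Hpow : 0 < u ^ S n) by (apply pow_lt; lra).
  rewrite Rabs_mult, Rabs_right by (apply Rle_ge, Rdiv_le_0_compat; lra).
  assert (Hz0 : Rabs (Derive_n g (S n) z) <= Rabs (Derive_n g (S n) z0)) by (apply Hmax; lra).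
  replace (Rabs (Derive_n g (S n) z0) / INR (Factorial.fact (S n)) * u ^ S n)
    with (u ^ S n / INR (Factorial.fact (S n)) * Rabs (Derive_n g (S n) z0)) by (field; lra).
  apply Rmult_le_compat_l; [apply Rdiv_le_0_compat; lra | exact Hz0].
Qed.

Lemma linear_remainder_bound (f : R -> R) (s B y0 : R) (n : nat) :
  (forall x, ex_derive f x) -> 0 <= B ->
  (forall u, 0 < u <= y0 -> Rabs (Derive f u - s) <= B * u ^ n) ->
  forall u, 0 < u <= y0 -> Rabs (f u - f 0 - s * u) <= B * u ^ S n.
Proof.
  intros Hf HB Hbound u Hu.
  destruct (MVT_cor2 f (Derive f) 0 u) as [c [Hmvt Hc]]; [lra | |].
  { intros c _. apply is_derive_Reals, Derive_correct, Hf. }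
  replace (f u - f 0 - s * u) with ((Derive f c - s) * u) by lra.
  rewrite Rabs_mult, (Rabs_right u) by lra. simpl.
  assert (Hpow : B * c ^ n <= B * u ^ n)
    by (apply Rmult_le_compat_l, pow_incr; lra).
  specialize (Hbound c ltac:(lra)). nra.
Qed.

Lemma strictly_decreasing_between_limits (U : R -> R) (a b : R) :
  strictly_decreasing U -> is_lim U m_infty a -> is_lim U p_infty b ->
  forall x, b < U x < a.
Proof.
  intros Hdec Ha Hb x. split.
  - assert (Hle : Rbar_le b (U (x + 1))).
    { apply (is_lim_le_loc U (fun _ => U (x + 1)) p_infty); [| exact Hb | apply is_lim_const].
      exists (x + 1). intros y Hy. apply Rlt_le, Hdec, Hy. }
    simpl in Hle. specialize (Hdec x (x + 1)). lra.
  - assert (Hle : Rbar_le (U (x - 1)) a).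
    { apply (is_lim_le_loc (fun _ => U (x - 1)) U m_infty); [| apply is_lim_const | exact Ha].
      exists (x - 1). intros y Hy. apply Rlt_le, Hdec, Hy. }
    simpl in Hle. specialize (Hdec (x - 1) x). lra.
Qed.

Lemma is_derive_0_constant (W : R -> R) :
  (forall x, is_derive W x 0) -> forall x y, W x = W y.
Proof.
  intros HW x y. destruct (Rtotal_order x y) as [h | [-> | h]].
  - apply eq_is_derive; [intros; apply HW | exact h].
  - reflexivity.
  - symmetry. apply eq_is_derive; [intros; apply HW | exact h].
Qed.

Lemma bounded_derive_lim_p_infty (P P' : R -> R) (M L : R) :
  (forall x, is_derive P x (P' x)) -> (forall x, Rabs (P x) <= M) ->
  is_lim P' p_infty L -> L = 0.
Proof.
  intros HP HM HL. destruct (Req_dec L 0) as [HL0 | HL0]; [exact HL0 | exfalso].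
  assert (HM0 : 0 <= M) by (eapply Rle_trans; [apply Rabs_pos | apply (HM 0)]).
  assert (HLpos : 0 < Rabs L) by (apply Rabs_pos_lt, HL0).
  apply is_lim_spec in HL.
  destruct (HL (mkposreal (Rabs L / 2) ltac:(lra))) as [N HN]. simpl in HN.
  set (T := 4 * (M + 1) / Rabs L).
  assert (HT : 0 < T) by (apply Rdiv_lt_0_compat; lra).
  destruct (MVT_cor2 P P' (N + 1) (N + 1 + T)) as [c [Hmvt Hc]]; [lra | |].
  { intros c _. apply is_derive_Reals, HP. }
  assert (HPc : Rabs L / 2 < Rabs (P' c)).
  { specialize (HN c ltac:(lra)). rewrite Rabs_minus_sym in HN.
    pose proof (Rabs_triang_inv L (P' c)). lra. }
  assert (Hosc : Rabs (P (N + 1 + T) - P (N + 1)) <= 2 * M).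
  { unfold Rminus. eapply Rle_trans; [apply Rabs_triang |].
    rewrite Rabs_Ropp. pose proof (HM (N + 1 + T)). pose proof (HM (N + 1)). lra. }
  replace (N + 1 + T - (N + 1)) with T in Hmvt by ring.
  rewrite Hmvt, Rabs_mult, (Rabs_right T) in Hosc by lra.
  assert (Hgrowth : Rabs L / 2 * T = 2 * (M + 1)) by (unfold T; field; lra).
  nra.
Qed.

Lemma Rpower_INR_plus (u a : R) (n : nat) :
  0 < u -> Rpower u (INR n + a) = u ^ n * Rpower u a.
Proof. intros Hu. rewrite Rpower_plus, Rpower_pow by exact Hu. reflexivity. Qed.

Section ProfileRhs.

Variables (m mu s : R) (f : R -> R).
Hypotheses (Hm : 0 < m) (Hmu : 0 < mu) (Hf : forall x, ex_derive f x).

Definition profile_rhs (u : R) : R :=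
  (f u - f 0 - s * u) * Rpower u (1 - m) / (mu * m).

Definition profile_rhs' (u : R) : R :=
  ((Derive f u - s) * Rpower u (1 - m)
   + (f u - f 0 - s * u) * ((1 - m) * Rpower u (1 - m) / u)) / (mu * m).

Lemma profile_rhs_is_derive (u : R) : 0 < u -> is_derive profile_rhs u (profile_rhs' u).
Proof.
  intros Hu. unfold profile_rhs, profile_rhs', Rpower. auto_derive.
  - repeat split; auto.
  - change (Derive (fun x => f x) u) with (Derive f u). field. lra.
Qed.

Variables (B y0 : R) (n : nat).
Hypotheses
  (Hlin : forall u, 0 < u <= y0 -> Rabs (Derive f u - s) <= B * u ^ n)
  (Hquad : forall u, 0 < u <= y0 -> Rabs (f u - f 0 - s * u) <= B * u ^ S n).

Lemma profile_rhs_bound (u : R) : 0 < u <= y0 ->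
  Rabs (profile_rhs u) <= B / (mu * m) * Rpower u (INR n + 2 - m).
Proof.
  intros Hu.
  assert (Hmum : 0 < mu * m) by (apply Rmult_lt_0_compat; lra).
  assert (Hpow : 0 < Rpower u (1 - m)) by apply exp_pos.
  replace (INR n + 2 - m) with (INR (S n) + (1 - m)) by (rewrite S_INR; ring).
  rewrite Rpower_INR_plus by lra.
  unfold profile_rhs, Rdiv. rewrite !Rabs_mult, Rabs_inv, (Rabs_right (Rpower _ _)),
    (Rabs_right (mu * m)) by lra.
  replace (B * / (mu * m) * (u ^ S n * Rpower u (1 - m)))
    with (B * u ^ S n * Rpower u (1 - m) * / (mu * m)) by ring.
  apply Rmult_le_compat_r; [apply Rlt_le, Rinv_0_lt_compat; lra |].
  apply Rmult_le_compat_r; [lra | apply Hquad, Hu].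
Qed.

Lemma profile_rhs'_bound (u : R) : m < 1 -> 0 < u <= y0 ->
  Rabs (profile_rhs' u) <= B * (2 - m) / (mu * m) * Rpower u (INR n + 1 - m).
Proof.
  intros Hm1 Hu.
  assert (Hmum : 0 < mu * m) by (apply Rmult_lt_0_compat; lra).
  assert (Hpow : 0 < Rpower u (1 - m)) by apply exp_pos.
  assert (Hscale : 0 < (1 - m) * Rpower u (1 - m) / u)
    by (apply Rdiv_lt_0_compat; [apply Rmult_lt_0_compat |]; lra).
  assert (H1 : Rabs ((Derive f u - s) * Rpower u (1 - m)) <= B * u ^ n * Rpower u (1 - m)).
  { rewrite Rabs_mult, (Rabs_right (Rpower _ _)) by lra.
    apply Rmult_le_compat_r; [lra | apply Hlin, Hu]. }
  assert (H2 : Rabs ((f u - f 0 - s * u) * ((1 - m) * Rpower u (1 - m) / u))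
               <= B * (1 - m) * u ^ n * Rpower u (1 - m)).
  { rewrite Rabs_mult, (Rabs_right (_ / u)) by lra.
    replace (B * (1 - m) * u ^ n * Rpower u (1 - m))
      with (B * u ^ S n * ((1 - m) * Rpower u (1 - m) / u)) by (simpl; field; lra).
    apply Rmult_le_compat_r; [lra | apply Hquad, Hu]. }
  replace (INR n + 1 - m) with (INR n + (1 - m)) by ring.
  rewrite Rpower_INR_plus by lra.
  unfold profile_rhs', Rdiv. rewrite Rabs_mult, Rabs_inv, (Rabs_right (mu * m)) by lra.
  replace (B * (2 - m) * / (mu * m) * (u ^ n * Rpower u (1 - m)))
    with ((B * u ^ n * Rpower u (1 - m) + B * (1 - m) * u ^ n * Rpower u (1 - m)) * / (mu * m))
    by ring.
  apply Rmult_le_compat_r; [apply Rlt_le, Rinv_0_lt_compat; lra |].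
  eapply Rle_trans; [apply Rabs_triang |]. lra.
Qed.

End ProfileRhs.

Section ShockProfile.

Variables (m mu s um : R) (f U : R -> R).
Hypotheses (Hm : 0 < m) (Hmu : 0 < mu) (Hf : forall x, ex_derive f x)
  (HU2 : twice_differentiable U) (HUrange : forall x, 0 < U x < um)
  (Hode : forall x, - s * Derive U x + Derive (fun y => f (U y)) x
                    = mu * Derive_n (fun y => Rpower (U y) m) 2 x)
  (Hlim : is_lim U p_infty 0).

Lemma profile_power_is_derive (x : R) :
  is_derive (fun y => Rpower (U y) m) x (Derive U x * (m * Rpower (U x) (m - 1))).
Proof.
  apply (is_derive_comp (fun y => Rpower y m) U).
  - apply is_derive_Reals, derivable_pt_lim_power, HUrange.
  - apply Derive_correct, HU2.
Qed.

Lemma ex_derive_Derive_profile_power (x : R) :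
  ex_derive (Derive (fun y => Rpower (U y) m)) x.
Proof.
  apply (ex_derive_ext (fun y => Derive U y * (m * Rpower (U y) (m - 1)))).
  - intros y. symmetry. apply is_derive_unique, profile_power_is_derive.
  - unfold Rpower. auto_derive. repeat split; try apply HU2; apply HUrange.
Qed.

Lemma profile_first_integral :
  exists K, forall x, mu * Derive (fun y => Rpower (U y) m) x = f (U x) - s * U x - K.
Proof.
  set (W := fun x => - s * U x + f (U x) - mu * Derive (fun y => Rpower (U y) m) x).
  assert (HW : forall x, is_derive W x 0).
  { intros x.
    assert (Hflux : ex_derive (fun y => - s * U y + f (U y)) x).
    { auto_derive. repeat split; first [apply HU2 | apply Hf]. }
    assert (Hvisc : ex_derive (fun y => mu * Derive (fun z => Rpower (U z) m) y) x)
      by (apply ex_derive_scal, ex_derive_Derive_profile_power).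
    replace 0 with (Derive W x).
    { apply Derive_correct, (ex_derive_minus _ _ _ Hflux Hvisc). }
    unfold W. rewrite Derive_minus by (exact Hflux || exact Hvisc).
    rewrite Derive_plus by (auto_derive; repeat split; first [apply HU2 | apply Hf]).
    rewrite !Derive_scal.
    pose proof (Hode x) as Hx.
    change (Derive_n (fun y => Rpower (U y) m) 2 x)
      with (Derive (Derive (fun y => Rpower (U y) m)) x) in Hx.
    lra. }
  exists (W 0). intros x.
  pose proof (is_derive_0_constant W HW x 0) as HWx. unfold W in *. lra.
Qed.

Lemma profile_integrated_ode (x : R) :
  mu * Derive (fun y => Rpower (U y) m) x = f (U x) - f 0 - s * U x.
Proof.
  destruct profile_first_integral as [K HK].
  enough (HK0 : K = f 0) by (rewrite HK, HK0; ring).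
  set (g := fun u => (f u - s * u - K) / mu).
  assert (Hg : is_lim (fun x => g (U x)) p_infty (g 0)).
  { apply (filterlim_comp _ _ _ U g _ (locally 0)); [exact Hlim |].
    apply (ex_derive_continuous g 0). unfold g. auto_derive. apply Hf. }
  assert (Hlim0 : g 0 = 0).
  { apply (bounded_derive_lim_p_infty (fun y => Rpower (U y) m)
             (Derive (fun y => Rpower (U y) m)) (Rpower um m)).
    - intros y. apply Derive_correct. eexists. apply profile_power_is_derive.
    - intros y. rewrite Rabs_right by (apply Rle_ge, Rlt_le, exp_pos).
      apply Rle_Rpower_l; [lra | pose proof (HUrange y); lra].
    - apply (is_lim_ext (fun x => g (U x))); [| exact Hg].
      intros y. unfold g. rewrite <- HK. field. lra. }
  unfold g, Rdiv in Hlim0. destruct (Rmult_integral _ _ Hlim0) as [H0 | H0]; [lra |].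
  exfalso. apply (Rinv_neq_0_compat mu); lra.
Qed.

Lemma profile_Derive_eq (x : R) : Derive U x = profile_rhs m mu s f (U x).
Proof.
  pose proof (profile_integrated_ode x) as Hx.
  replace (Derive (fun y => Rpower (U y) m) x)
    with (Derive U x * (m * Rpower (U x) (m - 1))) in Hx
    by (symmetry; apply is_derive_unique, profile_power_is_derive).
  unfold profile_rhs. rewrite <- Hx.
  assert (Hinv : Rpower (U x) (m - 1) * Rpower (U x) (1 - m) = 1).
  { rewrite <- Rpower_plus. replace (m - 1 + (1 - m)) with 0 by ring.
    apply Rpower_O, HUrange. }
  replace (mu * (Derive U x * (m * Rpower (U x) (m - 1))) * Rpower (U x) (1 - m) / (mu * m))
    with (Derive U x * (Rpower (U x) (m - 1) * Rpower (U x) (1 - m))) by (field; lra).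
  rewrite Hinv. ring.
Qed.

Lemma profile_Derive2_eq (x : R) :
  Derive_n U 2 x = Derive U x * profile_rhs' m mu s f (U x).
Proof.
  change (Derive_n U 2 x) with (Derive (Derive U) x).
  rewrite (Derive_ext (Derive U) (fun y => profile_rhs m mu s f (U y)))
    by exact profile_Derive_eq.
  apply is_derive_unique, (is_derive_comp (profile_rhs m mu s f) U).
  - apply profile_rhs_is_derive; [exact Hm | exact Hmu | exact Hf | apply HUrange].
  - apply Derive_correct, HU2.
Qed.

Lemma profile_derivative_bounds (B : R) (n : nat) : m < 1 -> 0 <= B ->
  (forall u, 0 < u <= um -> Rabs (Derive f u - s) <= B * u ^ n) ->
  (forall u, 0 < u <= um -> Rabs (f u - f 0 - s * u) <= B * u ^ S n) ->
  exists C, 0 < C /\ forall x,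
    Rabs (Derive U x) <= C * Rpower (U x) (INR n + 2 - m) /\
    Rabs (Derive_n U 2 x) <= C * Rpower (U x) (2 * INR n + 3 - 2 * m).
Proof.
  intros Hm1 HB0 Hlin Hquad.
  assert (Hmum : 0 < mu * m) by (apply Rmult_lt_0_compat; lra).
  assert (HC1 : 0 <= B / (mu * m)) by (apply Rdiv_le_0_compat; lra).
  assert (HC2 : 0 <= B * (2 - m) / (mu * m)) by (apply Rdiv_le_0_compat; nra).
  set (C1 := B / (mu * m)) in *. set (C2 := B * (2 - m) / (mu * m)) in *.
  exists (C1 + C1 * C2 + 1). split; [nra |]. intros xi.
  assert (Hu : 0 < U xi <= um) by (pose proof (HUrange xi); lra).
  pose proof (profile_rhs_bound m mu s f Hm Hmu B um n Hquad (U xi) Hu) as H1.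
  pose proof (profile_rhs'_bound m mu s f Hm Hmu B um n Hlin Hquad (U xi) Hm1 Hu) as H2.
  fold C1 in H1. fold C2 in H2.
  rewrite <- profile_Derive_eq in H1.
  rewrite profile_Derive2_eq.
  replace (2 * INR n + 3 - 2 * m) with ((INR n + 2 - m) + (INR n + 1 - m)) by ring.
  rewrite Rpower_plus, Rabs_mult.
  assert (HX1 : 0 < Rpower (U xi) (INR n + 2 - m)) by apply exp_pos.
  assert (HX2 : 0 < Rpower (U xi) (INR n + 1 - m)) by apply exp_pos.
  assert (HC : C1 <= C1 + C1 * C2 + 1 /\ C1 * C2 <= C1 + C1 * C2 + 1) by (split; nra).
  split.
  - eapply Rle_trans; [exact H1 |]. apply Rmult_le_compat_r; lra.
  - eapply Rle_trans.
    { apply Rmult_le_compat; [apply Rabs_pos | apply Rabs_pos | exact H1 | exact H2]. }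
    replace (C1 * Rpower (U xi) (INR n + 2 - m) * (C2 * Rpower (U xi) (INR n + 1 - m)))
      with (C1 * C2 * (Rpower (U xi) (INR n + 2 - m) * Rpower (U xi) (INR n + 1 - m)))
      by ring.
    apply Rmult_le_compat_r; [nra | lra].
Qed.

End ShockProfile.

Theorem lemma6p1
  (m mu : R) (f : R -> R) (um up s : R) (kp : nat) (U : R -> R)
  (Hm : 0 < m < 1) (Hmu : 0 < mu) (Hf : smooth f)
  (Hup : up = 0) (Hum : um > up)
  (Hs : s = (f up - f um) / (up - um))
  (Hfp : Derive f up = s) (Hfm : s < Derive f um)
  (Hk : (1 <= kp)%nat)
  (Hdeg : forall j : nat, (2 <= j <= kp)%nat -> Derive_n f j up = 0)
  (Hnondeg : Derive_n f (S kp) up <> 0)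
  (HUdec : strictly_decreasing U)
  (HU2 : twice_differentiable U)
  (Hode : forall xi : R,
      - s * Derive U xi + Derive (fun y => f (U y)) xi
      = mu * Derive_n (fun y => Rpower (U y) m) 2 xi)
  (Hlm : is_lim U m_infty um)
  (Hlp : is_lim U p_infty up) :
  exists C : R, 0 < C /\
    forall xi : R,
      Rabs (Derive U xi) <= C * Rpower (U xi) (INR kp + 2 - m) /\
      Rabs (Derive_n U 2 xi) <= C * Rpower (U xi) (2 * INR kp + 3 - 2 * m).
Proof.
  subst up. destruct kp as [|q]; [lia |].
  pose proof (strictly_decreasing_between_limits U um 0 HUdec Hlm Hlp) as HUrange.
  assert (Hf1 : forall x, ex_derive f x) by exact (Hf 1%nat).
  destruct (flat_at_0_bound (Derive f) q um (smooth_Derive f Hf)) as [B [HB0 Hlin]];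
    [intros j Hj; rewrite Derive_n_Derive; apply Hdeg; lia | lra |].
  rewrite Hfp in Hlin.
  exact (profile_derivative_bounds m mu s um f U ltac:(lra) Hmu Hf1 HU2 HUrange Hode Hlp
           B (S q) ltac:(lra) HB0 Hlin (linear_remainder_bound f s B um (S q) Hf1 HB0 Hlin)).
Qed.
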